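(* Let $K$ be a field, $S=K[x_1,\ldots,x_n]$, and let $I=(x_{i_1}^2,\ldots,x_{i_k}^2,J)\subset S$ be a monomial ideal generated in degree $2$, where $i_1,\ldots,i_k$ are distinct and $J$ is the ideal generated by all squarefree monomials in $I$. Let $G$ be the graph on vertex set $[n]$ with $\{i,j\}$ ($i\ne j$) an edge iff $x_ix_j\in J$, and let $\overline{G}$ be its complementary graph. Suppose $I$ has a linear resolution, and let $\Delta$ be a quasi-tree whose $1$-skeleton is $\overline{G}$ (such a quasi-tree exists under this hypothesis). Then each $i_j$, $j=1,\ldots,k$, is a free vertex of $\Delta$, and no two of the vertices $i_1,\ldots,i_k$ belong to the same facet of $\Delta$.
   Context: The complementary graph $\overline{G}$ has vertex set $[n]$ and as edges exactly the pairs $\{i,j\}$, $i\ne j$, that are not edges of $G$. For a simplicial complex $\Delta$ with set of facets $\mathcal F(\Delta)$: a facet $F$ is a leaf if either $F$ is the only facet, or there is a facet $G'\ne F$ with $H\cap F\subseteq G'\cap F$ for every facet $H\neq F$. $\Delta$ is a quasi-tree if its facets can be labelled $F_1,\ldots,F_m$ so that for each $i$, $F_i$ is a leaf of the subcomplex $\langle F_1,\ldots,F_i\rangle$ generated by $F_1,\ldots,F_i$. A vertex is a free vertex of $\Delta$ if it belongs to exactly one facet. The $1$-skeleton of $\Delta$ is the graph of its vertices and $1$-dimensional faces. Linear resolution: minimal graded free resolution with $F_i\cong S(-2-i)^{\beta_i}$. *)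

From HB Require Import structures.
From mathcomp Require Import all_boot all_order all_algebra.
From mathcomp Require Import mpoly.
Set Implicit Arguments. Unset Strict Implicit. Unset Printing Implicit Defensive.
Import GRing.Theory.
Local Open Scope ring_scope.

(* Polynomial ring S = K[x_1..x_n] is {mpoly K[n]}, variables 'X_i,    *)
(* i : 'I_n  (so the vertex set [n] is 'I_n).                          *)

(* p is homogeneous of degree d (the zero polynomial counts as such). *)
Definition homog_of_deg (K : fieldType) (n d : nat) (p : {mpoly K[n]}) : bool :=
  all [pred m | mdeg m == d] (msupp p).

(* The monomial ideal I = (x_i^2 : i in A, x_i x_j : {i,j} edge of G),
   given as a membership predicate: p \in I iff p is an S-linear
   combination of the generators. *)
Definition gens_I (K : fieldType) (n : nat) (A : {set 'I_n}) (E : rel 'I_n)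
    : seq {mpoly K[n]} :=
  [seq 'X_i * 'X_i | i <- enum A] ++
  [seq 'X_(p.1) * 'X_(p.2) | p <- enum [pred p : 'I_n * 'I_n | E p.1 p.2]].

Definition ideal_gen (K : fieldType) (n : nat) (g : seq {mpoly K[n]})
    (p : {mpoly K[n]}) : Prop :=
  exists c : 'I_(size g) -> {mpoly K[n]}, p = \sum_(i < size g) c i * g`_i.

(* I (an ideal of S, given by membership) has a linear resolution:
   there is a graded free resolution
     ... -> F_2 -> F_1 -> F_0 -> I -> 0,   F_i = S(-2-i)^(b i),
   given by a row g : F_0 -> S (entries homogeneous of degree 2, image = I)
   and matrices d i : F_(i+1) -> F_i whose entries are homogeneous of
   degree 1 (the maps are degree-preserving), and the complex is exact.
   (Such a resolution is automatically minimal, hence this says the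
   minimal graded free resolution has the form F_i = S(-2-i)^(beta_i).) *)
Definition has_linear_resolution (K : fieldType) (n : nat)
    (I : {mpoly K[n]} -> Prop) : Prop :=
  exists (b : nat -> nat) (g : 'rV[{mpoly K[n]}]_(b 0%N))
         (d : forall i : nat, 'M[{mpoly K[n]}]_(b i, b i.+1)),
    [/\ (forall j, homog_of_deg 2 (g 0 j)),
        (forall i j k, homog_of_deg 1 (d i j k)),
        (forall p, I p <-> exists v : 'cV[{mpoly K[n]}]_(b 0%N), p = (g *m v) 0 0),
        (forall v : 'cV[{mpoly K[n]}]_(b 0%N),
            g *m v = 0 <-> exists w : 'cV_(b 1%N), v = d 0%N *m w) &
        (forall (i : nat) (v : 'cV[{mpoly K[n]}]_(b i.+1)),
            d i *m v = 0 <-> exists w : 'cV_(b i.+2), v = d i.+1 *m w)].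

(* Simplicial complexes on [n], given by their set of facets.          *)

Definition is_facet_set (n : nat) (F : {set {set 'I_n}}) : Prop :=
  forall A B, A \in F -> B \in F -> A \subset B -> A = B.

Definition is_leaf (n : nat) (Fs : seq {set 'I_n}) (F : {set 'I_n}) : Prop :=
  (forall H, H \in Fs -> H = F) \/
  exists2 G', (G' \in Fs) /\ G' != F &
    forall H, H \in Fs -> H != F -> H :&: F \subset G' :&: F.

Definition is_quasi_tree (n : nat) (F : {set {set 'I_n}}) : Prop :=
  is_facet_set F /\
  exists s : seq {set 'I_n},
    [/\ uniq s, (forall A, (A \in s) = (A \in F)) &
        forall i : nat, (i < size s)%N ->
          is_leaf (take i.+1 s) (nth set0 s i)].

Definition one_skeleton_is (n : nat) (F : {set {set 'I_n}}) (adj : rel 'I_n)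
    : Prop :=
  (forall v : 'I_n, exists2 A, A \in F & v \in A) /\
  (forall u v : 'I_n, u != v ->
     (adj u v <-> exists2 A, A \in F & (u \in A) && (v \in A))).

Definition free_vertex (n : nat) (F : {set {set 'I_n}}) (v : 'I_n) : Prop :=
  #|[set A in F | v \in A]| = 1%N.

From HB Require Import structures.
From mathcomp Require Import all_boot all_order all_algebra.
From mathcomp Require Import mpoly.
Set Implicit Arguments. Unset Strict Implicit. Unset Printing Implicit Defensive.
Import GRing.Theory.
Local Open Scope ring_scope.

(* A linear resolution has linear first syzygies.  For i in A and another
   quadratic generator x^m, the Koszul syzygy x^m e_(x_i^2) - x_i^2 e_(x^m)
   must therefore be a combination of linear syzygies.  Weighting the k-th
   basis element by the coefficient of x_i^2 in the k-th generator, the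
   coefficient of x^m of the Koszul syzygy is 1, while that of a linear
   syzygy vanishes as long as no x_i x_l with x_l | x^m, l <> i, lies in I.
   Hence such an edge {i, l} of G exists.  For x^m = x_j^2 (j in A) this
   makes {i, j} an edge of G, so i and j share no facet; for x^m = x_u x_v
   it makes the closed neighbourhood of i in the complement of G a clique.
   A clique of the 1-skeleton of a quasi-tree lies in a facet (induction
   along a leaf order), every facet through i lies in that neighbourhood,
   and facets are incomparable, so i is a free vertex. *)

Section MonomialCoefficients.
Variables (R : ringType) (n : nat).
Implicit Types (p q : {mpoly R[n]}) (m mu : 'X_{1..n}).

Lemma lem_mdeg_eq mu m : (mu <= m)%MM -> mdeg mu = mdeg m -> mu = m.
Proof.
move=> /submK <-; rewrite mdegD -{1}[mdeg mu]add0n => /addIn/esym/eqP.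
by rewrite mdeg_eq0 => /eqP ->; rewrite add0m.
Qed.

Lemma submm m : (m - m)%MM = 0%MM.
Proof. by rewrite -{1}[m]add0m addmK. Qed.

Lemma mcoeffMXE p mu m :
  (p * 'X_[mu])@_m = if (mu <= m)%MM then p@_(m - mu) else 0.
Proof.
case: ifP => [mu_m|mu_m]; first by rewrite -{1}(submK mu_m) addmC mcoeffMX.
apply/eqP; rewrite mcoeff_eq0 (perm_mem (msuppMX _ _)).
by apply/negP => /mapP [m' _ m_eq]; move: mu_m; rewrite m_eq lem_addr.
Qed.

Lemma mcoeffM_msupp p q m : (p * q)@_m =
  \sum_(mu <- msupp p) p@_mu * (if (mu <= m)%MM then q@_(m - mu) else 0).
Proof.
rewrite {1}(mpolyE p) mulr_suml raddf_sum; apply: eq_bigr => mu _.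
by rewrite -scalerAl /= mcoeffZ -commr_mpolyX mcoeffMXE.
Qed.

Lemma mcoeff_msuppE p m : p@_m = \sum_(mu <- msupp p) p@_mu * (mu == m)%:R.
Proof.
rewrite {1}(mpolyE p) raddf_sum; apply: eq_bigr => mu _.
by rewrite /= mcoeffZ mcoeffX.
Qed.

End MonomialCoefficients.

Section QuadraticMonomials.
Variable n : nat.
Implicit Types (i j l u v : 'I_n).

Lemma eq_mnm1 i j : (U_(i) == U_(j))%MM = (i == j).
Proof.
apply/eqP/eqP => [/(congr1 (fun m : 'X_{1..n} => m i))|-> //].
by rewrite !mnm1E eqxx; case: eqP.
Qed.

Lemma mdeg_mnm1D u v : mdeg (U_(u) + U_(v))%MM = 2%N.
Proof. by rewrite mdegD !mdeg1. Qed.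

Lemma lem_mnm1D l u v :
  (U_(l) <= U_(u) + U_(v))%MM -> (l == u) || (l == v).
Proof.
move/mnm_lepP/(_ l); rewrite mnmDE !mnm1E eqxx ![_ == l]eq_sym.
by case: (l == u); case: (l == v).
Qed.

Lemma lem_mnm1D3 l l' i :
  (U_(l') <= U_(i) + U_(i) + U_(l))%MM -> l' != l -> l' = i.
Proof.
move/mnm_lepP/(_ l'); rewrite !mnmDE !mnm1E eqxx [l == l']eq_sym.
move=> + /negbTE l'l.
by rewrite l'l [i == l']eq_sym; case: eqP.
Qed.

Lemma mnm1D_neq_sq i u v :
  u != i -> (U_(u) + U_(v))%MM != (U_(i) + U_(i))%MM.
Proof.
move=> /negbTE ui; apply/eqP => /(congr1 (fun m : 'X_{1..n} => m i)).
by rewrite !mnmDE !mnm1E eqxx ui; case: (v == i).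
Qed.

End QuadraticMonomials.

Section Homogeneous.
Variables (K : fieldType) (n : nat).
Implicit Types (p q : {mpoly K[n]}) (m mu : 'X_{1..n}).

Lemma homog_of_deg_mdeg d p mu :
  homog_of_deg d p -> mu \in msupp p -> mdeg mu = d.
Proof. by move=> /allP hp /hp /eqP. Qed.

Lemma mcoeffM_homog d p q m : homog_of_deg d p -> mdeg m = d ->
  (p * q)@_m = p@_m * q@_0.
Proof.
move=> hp dm; rewrite mcoeffM_msupp mcoeff_msuppE mulr_suml !big_seq.
apply: eq_bigr => mu /(homog_of_deg_mdeg hp) dmu.
case: ifP => [mu_m|mu_m].
  by rewrite (lem_mdeg_eq mu_m) ?dm // eqxx mulr1 submm.
by case: eqP mu_m => [->|_]; rewrite ?lepm_refl // !mulr0 mul0r.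
Qed.

Lemma mcoeffM_linear p q m : homog_of_deg 1 p -> (p * q)@_m =
  \sum_(l < n) p@_U_(l) * (if (U_(l) <= m)%MM then q@_(m - U_(l)) else 0).
Proof.
move=> hp; rewrite mcoeffM_msupp.
under [RHS]eq_bigr => l _ do rewrite mcoeff_msuppE mulr_suml.
rewrite exchange_big /= !big_seq; apply: eq_bigr => mu.
move=> /(homog_of_deg_mdeg hp)/eqP/mdeg1P [j /eqP ->].
rewrite (bigD1 j) //= eqxx mulr1 big1 ?addr0 // => l lj.
by rewrite eq_mnm1 eq_sym (negbTE lj) mulr0 mul0r.
Qed.

(* When g *m a = x^mu and g *m c = x^m, the column below is the Koszul syzygy
   of these two generators. *)
Lemma koszul_syzygy_mcoeff d b (g : 'rV[{mpoly K[n]}]_b) (a c : 'cV_b) mu m :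
  (forall k, homog_of_deg d (g 0 k)) -> mdeg mu = d -> mdeg m = d -> m != mu ->
  \sum_k (g 0 k)@_mu * ('X_[m] * a k 0 - 'X_[mu] * c k 0)@_m
    = ((g *m a) 0 0)@_mu.
Proof.
move=> g_deg dmu dm m_mu; rewrite mxE raddf_sum; apply: eq_bigr => k _ /=.
rewrite (mcoeffM_homog _ (g_deg k) dmu) mcoeffB -!commr_mpolyX !mcoeffMXE.
rewrite lepm_refl submm; case: ifP => [mu_m|_]; last by rewrite subr0.
by move: m_mu; rewrite (lem_mdeg_eq mu_m) ?eqxx // dmu dm.
Qed.

End Homogeneous.

Lemma ideal_gen_mem (K : fieldType) (n : nat) (g : seq {mpoly K[n]}) q :
  q \in g -> ideal_gen g q.
Proof.
move=> qg; exists (fun t => ((t : nat) == index q g)%:R).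
have qi : (index q g < size g)%N by rewrite index_mem.
rewrite (bigD1 (Ordinal qi)) //= eqxx mul1r nth_index // big1 ?addr0 //.
by move=> t; rewrite -val_eqE /= => /negbTE ->; rewrite mul0r.
Qed.

Section QuadraticMonomialIdeal.
Variables (K : fieldType) (n : nat) (A : {set 'I_n}) (E : rel 'I_n).
Hypothesis E_sym : ssrbool.symmetric E.
Local Notation gens := (gens_I K A E).
Local Notation I := (ideal_gen gens).
Implicit Types (i j l u v : 'I_n) (m mu : 'X_{1..n}).

Definition generator_exponent mu : Prop :=
  (exists2 i, i \in A & mu = (U_(i) + U_(i))%MM) \/
  (exists i j, E i j /\ mu = (U_(i) + U_(j))%MM).

Lemma gens_I_monomial q :
  q \in gens -> exists2 mu, q = 'X_[mu] & generator_exponent mu.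
Proof.
rewrite mem_cat => /orP [] /mapP [x x_in ->]; rewrite mem_enum in x_in.
  by exists (U_(x) + U_(x))%MM; rewrite ?mpolyXD //; left; exists x.
exists (U_(x.1) + U_(x.2))%MM; rewrite ?mpolyXD //.
by right; exists x.1, x.2.
Qed.

Lemma square_in_ideal i : i \in A -> I 'X_[U_(i) + U_(i)].
Proof.
move=> iA; rewrite mpolyXD; apply: ideal_gen_mem.
by rewrite mem_cat; apply/orP; left; apply/mapP; exists i; rewrite ?mem_enum.
Qed.

Lemma edge_in_ideal u v : E u v -> I 'X_[U_(u) + U_(v)].
Proof.
move=> uv; rewrite mpolyXD; apply: ideal_gen_mem.
rewrite mem_cat; apply/orP; right.
by apply/mapP; exists (u, v); rewrite ?mem_enum.
Qed.

Lemma ideal_mcoeff_eq0 p m : I p -> mdeg m = 2%N -> ~ generator_exponent m ->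
  p@_m = 0.
Proof.
move=> [c ->] dm m_gen; rewrite raddf_sum big1 // => t _.
have /gens_I_monomial [mu -> mu_gen] : gens`_t \in gens by rewrite mem_nth.
rewrite /= mcoeffMXE; case: ifP => // mu_m; case: m_gen.
suff <- : mu = m by [].
apply: lem_mdeg_eq => //; rewrite dm.
by case: mu_gen => [[? _ ->]|[? [? [_ ->]]]]; rewrite mdeg_mnm1D.
Qed.

Lemma non_edge_not_generator i l : i != l -> ~~ E i l ->
  ~ generator_exponent (U_(i) + U_(l))%MM.
Proof.
move=> il il_E e_gen.
have i_le : (U_(i) <= U_(i) + U_(l))%MM := lem_addr _ _.
have l_le : (U_(l) <= U_(i) + U_(l))%MM := lem_addl _ _.
move: il il_E i_le l_le; case: e_gen => [[p _ ->]|[p [q [pq ->]]]] il il_E.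
  move=> /lem_mnm1D + /lem_mnm1D; rewrite !orbb => /eqP ip /eqP lp.
  by move: il; rewrite ip lp eqxx.
have qp : E q p by rewrite E_sym.
move=> /lem_mnm1D + /lem_mnm1D.
by do 2!case/orP=> /eqP ?; subst; rewrite ?eqxx ?pq ?qp in il il_E.
Qed.

Section LinearSyzygies.
Variables (b b' : nat) (g : 'rV[{mpoly K[n]}]_b) (d : 'M[{mpoly K[n]}]_(b, b')).
Hypotheses (g_I : forall k, I (g 0 k))
  (d_linear : forall k c, homog_of_deg 1 (d k c)) (gd0 : g *m d = 0).
Variable i : 'I_n.

(* Compare the coefficients of x_i^2 x_l in g *m d = 0: besides x_l only x_i
   divides x_i^2 x_l, and x_i x_l has coefficient 0 in every element of I. *)
Lemma linear_syzygy_square_mcoeff l c : (l == i) || ~~ E i l ->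
  \sum_k (g 0 k)@_(U_(i) + U_(i)) * (d k c)@_U_(l) = 0.
Proof.
move=> il; have /matrixP/(_ 0 c) := gd0; rewrite !mxE.
move=> /(congr1 (mcoeff (U_(i) + U_(i) + U_(l)))); rewrite raddf_sum mcoeff0.
move=> sum0; rewrite -[RHS]sum0; apply: eq_bigr => k _ /=.
rewrite (mulrC (g 0 k)) (mcoeffM_linear _ _ (d_linear k c)) (bigD1 l) //=.
rewrite lem_addl addmK.
rewrite big1 => [|l' l'l]; first by rewrite addr0 mulrC.
case: ifP => [le|_]; last by rewrite mulr0.
have l'i := lem_mnm1D3 le l'l; subst l'.
have -> : (U_(i) + U_(i) + U_(l) - U_(i) = U_(i) + U_(l))%MM.
  by apply/mnmP => x; rewrite !mnmBE !mnmDE addnAC addnK.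
rewrite (ideal_mcoeff_eq0 (g_I k) (mdeg_mnm1D _ _)) ?mulr0 //.
by apply: non_edge_not_generator => //; move: il; rewrite eq_sym (negbTE l'l).
Qed.

Lemma linear_syzygy_image_mcoeff (w : 'cV_b') m :
  (forall l, (U_(l) <= m)%MM -> (l == i) || ~~ E i l) ->
  \sum_k (g 0 k)@_(U_(i) + U_(i)) * ((d *m w) k 0)@_m = 0.
Proof.
move=> m_nonedge.
under eq_bigr => k _ do rewrite mxE raddf_sum mulr_sumr.
rewrite exchange_big; apply: big1 => c _.
under eq_bigr => k _ do rewrite /= (mcoeffM_linear _ _ (d_linear k c)) mulr_sumr.
rewrite exchange_big; apply: big1 => l _.
case: (boolP (U_(l) <= m)%MM) => [l_m|_]; last first.
  by rewrite big1 // => k _; rewrite !mulr0.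
under eq_bigr => k _ do rewrite mulrA.
by rewrite -mulr_suml linear_syzygy_square_mcoeff ?mul0r ?m_nonedge.
Qed.

End LinearSyzygies.

Lemma linear_resolution_square_neighbour i m :
  has_linear_resolution I -> i \in A -> I 'X_[m] -> mdeg m = 2%N ->
  m != (U_(i) + U_(i))%MM ->
  exists2 l, (U_(l) <= m)%MM & (l != i) && E i l.
Proof.
move=> [bs [g [d [g_deg2 d_linear gen_I syz0 _]]]] iA mI dm m_sq.
have g_I k : I (g 0 k) by apply/gen_I; exists (delta_mx k 0); rewrite -colE mxE.
have gd0 : g *m d 0%N = 0.
  apply/matrixP => x c; have := (syz0 _).2 (ex_intro _ _ (colE c (d 0%N))).
  by rewrite colE mulmxA -colE => /matrixP/(_ x 0); rewrite !mxE.
have [a g_a] := (gen_I _).1 (square_in_ideal iA).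
have [c g_c] := (gen_I _).1 mI.
pose v := \col_k ('X_[m] * a k 0 - 'X_[U_(i) + U_(i)] * c k 0).
have g_v : g *m v = 0.
  apply/matrixP => x y; rewrite !ord1 !mxE.
  under eq_bigr => k _ do rewrite mxE mulrBr !(mulrCA (g 0 k)).
  rewrite sumrB -!mulr_sumr; move: g_a g_c; rewrite !mxE => <- <-.
  by rewrite mulrC subrr.
have [w v_dw] := (syz0 v).1 g_v.
suff: [exists l, [&& (U_(l) <= m)%MM, l != i & E i l]].
  by case/existsP => l /and3P [l_m li il]; exists l; rewrite ?li.
apply: contraT; rewrite negb_exists => /forallP no_edge.
have m_nonedge l : (U_(l) <= m)%MM -> (l == i) || ~~ E i l.
  by move=> l_m; move: (no_edge l); rewrite l_m /= negb_and negbK.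
have := linear_syzygy_image_mcoeff g_I (d_linear 0%N) gd0 w m_nonedge.
rewrite -v_dw; under eq_bigr => k _ do rewrite mxE.
rewrite (koszul_syzygy_mcoeff _ _ g_deg2) ?mdeg_mnm1D // -g_a mcoeffX eqxx.
by move/eqP; rewrite oner_eq0.
Qed.

Lemma linear_resolution_squares_adjacent i j : has_linear_resolution I ->
  i \in A -> j \in A -> i != j -> E i j.
Proof.
move=> lr iA jA ij.
have [|l /lem_mnm1D] := linear_resolution_square_neighbour lr iA
  (square_in_ideal jA) (mdeg_mnm1D _ _).
  by apply: mnm1D_neq_sq; rewrite eq_sym.
by rewrite orbb => /eqP ->; case/andP.
Qed.

Lemma linear_resolution_non_neighbours_independent i u v :
  has_linear_resolution I -> i \in A -> ~~ E i u -> ~~ E i v -> ~~ E u v.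
Proof.
move=> lr iA iu iv; case: (eqVneq u i) => [-> //|ui].
apply/negP => uv.
have [l /lem_mnm1D l_uv /andP [_ il]] :=
  linear_resolution_square_neighbour lr iA (edge_in_ideal uv) (mdeg_mnm1D _ _)
    (mnm1D_neq_sq _ ui).
by case/orP: l_uv il => /eqP ->; rewrite ?(negbTE iu) ?(negbTE iv).
Qed.

End QuadraticMonomialIdeal.

Section QuasiTrees.
Variable n : nat.
Implicit Types (s : seq {set 'I_n}) (C B : {set 'I_n}) (F : {set {set 'I_n}}).

Definition leaf_order s : Prop :=
  forall k, (k < size s)%N -> is_leaf (take k.+1 s) (nth set0 s k).

Definition skeleton_clique s C : Prop :=
  (forall u, u \in C -> exists2 B, B \in s & u \in B) /\
  (forall u v, u \in C -> v \in C -> u != v ->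
     exists2 B, B \in s & (u \in B) && (v \in B)).

Lemma leaf_order_rcons s B :
  leaf_order (rcons s B) -> leaf_order s /\ is_leaf (rcons s B) B.
Proof.
move=> lo; split => [k ks|].
  have := lo k; rewrite size_rcons ltnS (ltnW ks) -cats1 takel_cat // nth_cat ks.
  exact.
have := lo (size s); rewrite size_rcons ltnSn take_oversize ?size_rcons //.
by rewrite nth_rcons ltnn eqxx; apply.
Qed.

Lemma leaf_order_clique_sub s C :
  leaf_order s -> C != set0 -> skeleton_clique s C ->
  exists2 B, B \in s & C \subset B.
Proof.
elim/last_ind: s C => [|s L IH] C lo /set0Pn [x xC] [cover pair].
  by have [] := cover x xC.
have [{}lo [L_only|[G [G_s G_L] G_trace]]] := leaf_order_rcons lo.
  exists L; rewrite ?mem_rcons ?mem_head //.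
  by apply/subsetP => u /cover [B /L_only ->].
have [C_L|/subsetPn [w wC wL]] := boolP (C \subset L).
  by exists L; rewrite // mem_rcons mem_head.
(* Pick w in C outside the leaf L.  Every u in C shares a facet other than L
   with w, so the leaf condition puts C :&: L inside G; hence C is already a
   clique of the skeleton of s. *)
have in_s B : B \in rcons s L -> B != L -> B \in s.
  by rewrite mem_rcons in_cons => /orP [/eqP ->|//]; rewrite eqxx.
have s_sL B : B \in s -> B \in rcons s L.
  by rewrite mem_rcons in_cons => ->; rewrite orbT.
have w_L B : w \in B -> B != L by apply: contraTneq => ->.
have with_w u : u \in C -> exists2 B, B \in s & (u \in B) && (w \in B).
  move=> uC; have [->|uw] := eqVneq u w.
    by have [B B_sL wB] := cover w wC; exists B; rewrite ?wB ?in_s ?w_L.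
  have [B B_sL /andP [uB wB]] := pair u w uC wC uw.
  by exists B; rewrite ?uB ?wB ?in_s ?w_L.
have L_G u : u \in C -> u \in L -> u \in G.
  move=> uC uL; have [B B_s /andP [uB wB]] := with_w u uC.
  have /subsetP/(_ u) := G_trace B (s_sL B B_s) (w_L B wB).
  by rewrite !inE uB uL => /(_ isT) /andP [].
have [B B_s C_B] : exists2 B, B \in s & C \subset B.
  apply: IH => //; first by apply/set0Pn; exists x.
  split=> [u /with_w [B B_s /andP [uB _]]|u v uC vC uv]; first by exists B.
  have [B B_sL /andP [uB vB]] := pair u v uC vC uv.
  have [B_L|B_L] := eqVneq B L; last by exists B; rewrite ?uB ?vB ?in_s.
  by rewrite B_L in uB vB; exists G; rewrite ?in_s ?L_G.
by exists B; rewrite ?s_sL.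
Qed.

Lemma quasi_tree_clique_sub_facet F (adj : rel 'I_n) C :
  is_quasi_tree F -> one_skeleton_is F adj -> C != set0 ->
  (forall u v, u \in C -> v \in C -> u != v -> adj u v) ->
  exists2 B, B \in F & C \subset B.
Proof.
move=> [_ [s [_ sF lo]]] [cover adj_facet] C0 C_clique.
have [|B B_s C_B] := leaf_order_clique_sub lo C0; last by exists B; rewrite -?sF.
split=> [u _|u v uC vC uv]; first by have [B] := cover u; exists B; rewrite ?sF.
have [B] := (adj_facet u v uv).1 (C_clique u v uC vC uv).
by exists B; rewrite ?sF.
Qed.

Lemma free_vertex_sub_facet F v B0 : is_facet_set F -> B0 \in F -> v \in B0 ->
  (forall B, B \in F -> v \in B -> B \subset B0) -> free_vertex F v.
Proof.
move=> F_anti B0_F vB0 sub_B0.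
rewrite /free_vertex (_ : [set B in F | v \in B] = [set B0]) ?cards1 //.
apply/setP => B; rewrite !inE; apply/andP/eqP => [[BF vB]|->] //.
exact: F_anti (sub_B0 B BF vB).
Qed.

End QuasiTrees.

Theorem proposition2p5 (K : fieldType) (n : nat) (A : {set 'I_n})
    (E : rel 'I_n) (E_irr : irreflexive E) (E_sym : ssrbool.symmetric E)
    (F : {set {set 'I_n}}) :
  has_linear_resolution (ideal_gen (gens_I K A E)) ->
  is_quasi_tree F ->
  one_skeleton_is F (fun u v => (u != v) && ~~ E u v) ->
  (forall i, i \in A -> free_vertex F i) /\
  (forall i j, i \in A -> j \in A -> i != j ->
     forall B, B \in F -> ~ ((i \in B) && (j \in B))).
Proof.
move=> lr qt skel; split=> [i iA|i j iA jA ij B BF ijB]; last first.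
  have : (i != j) && ~~ E i j by apply/(skel.2 i j ij); exists B.
  by rewrite (linear_resolution_squares_adjacent E_sym lr iA jA ij) andbF.
pose C := [set u | ~~ E i u].
have iC : i \in C by rewrite inE E_irr.
have [F0 F0_F C_F0] : exists2 F0, F0 \in F & C \subset F0.
  apply: (quasi_tree_clique_sub_facet qt skel); first by apply/set0Pn; exists i.
  move=> u v; rewrite !inE => iu iv -> /=.
  exact: (linear_resolution_non_neighbours_independent E_sym lr iA iu iv).
apply: (free_vertex_sub_facet qt.1 F0_F (subsetP C_F0 i iC)) => B BF iB.
apply: subset_trans C_F0; apply/subsetP => u uB; rewrite inE.
have [->|ui] := eqVneq u i; first by rewrite E_irr.
have /andP [_] : (u != i) && ~~ E u i.
  by apply/(skel.2 u i ui); exists B; rewrite ?uB.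
by rewrite E_sym.
Qed.
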